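(* Let $a,b\in\mathbb{C}$ with $b\neq0$, and suppose $\cdot_\lambda\cdot$ is a compatible left-symmetric conformal algebraic structure on $\mathcal{W}(a,b)=\mathbb{C}[\partial]L\oplus\mathbb{C}[\partial]W$ such that $\mathbb{C}[\partial]L$ is a left-symmetric conformal subalgebra. Let $c\in\mathbb{C}$ with $L_\lambda L=(\partial+\lambda+c)L$, and write $L_\lambda W=g_1L+g_2W$, $W_\lambda L=h_1L+h_2W$, $W_\lambda W=k_1L+k_2W$ with $g_i,h_i,k_i\in\mathbb{C}[\lambda,\partial]$. Assume $c\neq0$, $g_2(\lambda,\partial)=\partial+a\lambda+b+c$ and $h_2(\lambda,\partial)=c$. Then one of the following holds: (B1) $h_1=g_1=k_1=k_2=0$ (and $g_2=\partial+a\lambda+b+c$, $h_2=c$); (B2) $a=1$, $c=b$, $g_2=\partial+\lambda+2b$, $h_2=b$, $g_1=h_1=d$, $k_1=-\frac{d^2}{b}$, $k_2=-d$, for some constant $d\in\mathbb{C}\setminus\{0\}$.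
   Context: A conformal algebra is a $\mathbb{C}[\partial]$-module $R$ with a $\mathbb{C}$-bilinear map $R\times R\to R[\lambda]$, $(x,y)\mapsto x_\lambda y$, satisfying $(\partial x)_\lambda y=-\lambda\, x_\lambda y$ and $x_\lambda(\partial y)=(\partial+\lambda)\,x_\lambda y$. For $x,y\in R$, $y_{-\lambda-\partial}x$ means: write $y_\mu x=\sum_j \mu^j z_j$ and set $y_{-\lambda-\partial}x=\sum_j(-\lambda-\partial)^j z_j$. A left-symmetric conformal algebra is a conformal algebra with $(x_\lambda y)_{\lambda+\mu}z-x_\lambda(y_\mu z)=(y_\mu x)_{\lambda+\mu}z-y_\mu(x_\lambda z)$. A compatible left-symmetric conformal algebraic structure on a Lie conformal algebra $(R,[\cdot_\lambda\cdot])$ is a left-symmetric conformal product on the same $\mathbb{C}[\partial]$-module with $x_\lambda y-y_{-\lambda-\partial}x=[x_\lambda y]$ for all $x,y$. $\mathcal{W}(a,b)$ is the free $\mathbb{C}[\partial]$-module with basis $L,W$ and Lie conformal brackets $[L_\lambda L]=(\partial+2\lambda)L$, $[L_\lambda W]=(\partial+a\lambda+b)W$, $[W_\lambda W]=0$. ''$\mathbb{C}[\partial]L$ is a left-symmetric conformal subalgebra'' means $L_\lambda L\in(\mathbb{C}[\partial]L)[\lambda]$; in that case $L_\lambda L=(\partial+\lambda+c)L$ for some $c\in\mathbb{C}$. *)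

From HB Require Import structures.
From mathcomp Require Import all_boot all_order all_algebra.
From mathcomp Require Import mpoly.
From mathcomp Require Import complex.
From mathcomp Require Import reals.
Set Implicit Arguments. Unset Strict Implicit. Unset Printing Implicit Defensive.
Import Order.TTheory GRing.Theory Num.Theory.
Local Open Scope ring_scope.

(* ℂ is modelled as R[i] for an arbitrary R : realType (any realType is
   isomorphic to the real numbers). *)

Section Conformal.
Variable F : comRingType.

(* Polynomials in C[λ,∂] : {mpoly F[2]} with 'X_0 = λ and 'X_1 = ∂.
   Polynomials in C[λ,μ,∂] : {mpoly F[3]} with 'X_0 = λ, 'X_1 = μ, 'X_2 = ∂. *)
Definition poly2 := {mpoly F[2]}.
Definition poly3 := {mpoly F[3]}.

(* An element p L + q W of (C[∂]L ⊕ C[∂]W)[λ,μ] is encoded by the pair (p, q). *)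
Definition elt := (poly3 * poly3)%type.

(* Structure data of a conformal product on the free C[∂]-module with basis
   e_0 = L, e_1 = W: (P i j) = (u, v) means  e_i _λ e_j = u(λ,∂) L + v(λ,∂) W. *)
Definition cdata := 'I_2 -> 'I_2 -> (poly2 * poly2)%type.

Definition comp (i : 'I_2) (x : elt) : poly3 := if val i == 0%N then x.1 else x.2.

Definition substD (t : poly3) (p : poly3) : poly3 :=
  comp_mpoly [tuple 'X_0; 'X_1; t] p.

Definition liftP (nu : poly3) (f : poly2) : poly3 :=
  comp_mpoly [tuple nu; 'X_2] f.

(* The unique C-bilinear product satisfying sesquilinearity
   (∂x)_ν y = -ν x_ν y and x_ν (∂y) = (∂+ν) x_ν y, with given values on the
   basis; coefficients of x and y that involve the other formal variables
   (λ, μ) are treated as scalars. *)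
Definition cprod (P : cdata) (nu : poly3) (x y : elt) : elt :=
  (\sum_(i < 2) \sum_(j < 2)
      substD (- nu) (comp i x) * substD ('X_2 + nu) (comp j y) * liftP nu (P i j).1,
   \sum_(i < 2) \sum_(j < 2)
      substD (- nu) (comp i x) * substD ('X_2 + nu) (comp j y) * liftP nu (P i j).2).

Definition eltB (x y : elt) : elt := (x.1 - y.1, x.2 - y.2).

Definition ofR (p q : {poly F}) : elt :=
  ((map_poly (@mpolyC 3 F) p).['X_2], (map_poly (@mpolyC 3 F) q).['X_2]).

Definition lam : poly3 := 'X_0.
Definition mu : poly3 := 'X_1.

Definition left_symmetric (P : cdata) : Prop :=
  forall x1 x2 y1 y2 z1 z2 : {poly F},
    let x := ofR x1 x2 in let y := ofR y1 y2 in let z := ofR z1 z2 in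
    eltB (cprod P (lam + mu) (cprod P lam x y) z) (cprod P lam x (cprod P mu y z))
    = eltB (cprod P (lam + mu) (cprod P mu y x) z) (cprod P mu y (cprod P lam x z)).

(* y_{-λ-∂} x : compute y_μ x and substitute μ := -λ-∂ *)
Definition substMu (p : poly3) : poly3 :=
  comp_mpoly [tuple 'X_0; - 'X_0 - 'X_2; 'X_2] p.

Definition compatible (B P : cdata) : Prop :=
  forall x1 x2 y1 y2 : {poly F},
    let x := ofR x1 x2 in let y := ofR y1 y2 in
    let yx := cprod P mu y x in
    eltB (cprod P lam x y) (substMu yx.1, substMu yx.2) = cprod B lam x y.

Definition mkdata (f1 f2 g1 g2 h1 h2 k1 k2 : poly2) : cdata :=
  fun i j => match val i, val j with
             | 0, 0 => (f1, f2)
             | 0, _ => (g1, g2)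
             | _, 0 => (h1, h2)
             | _, _ => (k1, k2)
             end%N.

(* Lie conformal algebra W(a,b):
   [L_λ L] = (∂+2λ)L, [L_λ W] = (∂+aλ+b)W, [W_λ W] = 0, and, by skew-symmetry,
   [W_λ L] = -[L_{-λ-∂} W] = -(∂ + a(-λ-∂) + b) W. *)
Definition Wab (a b : F) : cdata :=
  mkdata ('X_1 + 2%:R *: 'X_0) 0
         0 ('X_1 + a *: 'X_0 + b%:MP)
         0 (- ('X_1 + a *: (- 'X_0 - 'X_1) + b%:MP))
         0 0.

End Conformal.

From HB Require Import structures.
From mathcomp Require Import all_boot all_order all_algebra.
From mathcomp Require Import mpoly complex reals ring.
Import Order.TTheory GRing.Theory Num.Theory.
Local Open Scope ring_scope.

(* Write φ(∂) = g1(0,∂).  Compatibility with W(a,b) gives h1(λ,∂) = g1(-λ-∂,∂),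
   and the left-symmetric identity on (W,L,L) then reads ((1-a)∂ + b) φ(∂) = c φ(0):
   comparing both sides at ∂ = 0 (if a = 1) or at the root of (1-a)∂ + b (if a ≠ 1)
   shows that φ is a constant d, with d = 0 unless a = 1 and c = b.  The identity on
   (L,L,W) gives b g1 = d((a-1)λ + b), so g1 = h1 = d in both cases, and the identity
   on (L,W,W) gives b k2 = -c d and 2b k1 = d k2 - d².  Hence d = 0 yields (B1), and
   d ≠ 0 forces a = 1, c = b and yields (B2). *)

(* Locked so that unification never unfolds [comp_mpoly]: otherwise rewriting in
   the large identities below becomes intractable. *)
HB.lock Definition subst2 {F : comRingType} {k : nat} (g : poly2 F)
  (u v : {mpoly F[k]}) : {mpoly F[k]} := g \mPo [tuple u; v].
HB.lock Definition subst3 {F : comRingType} {k : nat} (p : poly3 F)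
  (s0 s1 s2 : {mpoly F[k]}) : {mpoly F[k]} := p \mPo [tuple s0; s1; s2].

Lemma comp_mpoly_comp (F : comRingType) n k l (p : {mpoly F[n]})
    (t : n.-tuple {mpoly F[k]}) (s : k.-tuple {mpoly F[l]}) :
  (p \mPo t) \mPo s = p \mPo [tuple tnth t i \mPo s | i < n].
Proof.
rewrite [p \mPo t]comp_mpolyEX [RHS]comp_mpolyEX raddf_sum /=.
apply: eq_bigr => m _; rewrite comp_mpolyZ !comp_mpolyX rmorph_prod /=.
by congr (_ *: _); apply: eq_bigr => i _; rewrite rmorphXn tnth_mktuple.
Qed.

Section Substitution.
Variables (F : comRingType) (k : nat) (u v s0 s1 s2 : {mpoly F[k]}).
Implicit Types (g h : poly2 F) (p q : poly3 F).

Lemma subst2D g h : subst2 (g + h) u v = subst2 g u v + subst2 h u v.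
Proof. by rewrite subst2.unlock; exact: comp_mpolyD. Qed.
Lemma subst2N g : subst2 (- g) u v = - subst2 g u v.
Proof. by rewrite subst2.unlock; exact: comp_mpolyN. Qed.
Lemma subst2B g h : subst2 (g - h) u v = subst2 g u v - subst2 h u v.
Proof. by rewrite subst2.unlock; exact: comp_mpolyB. Qed.
Lemma subst2M g h : subst2 (g * h) u v = subst2 g u v * subst2 h u v.
Proof. by rewrite subst2.unlock; exact: rmorphM. Qed.
Lemma subst2Z x g : subst2 (x *: g) u v = x *: subst2 g u v.
Proof. by rewrite subst2.unlock; exact: comp_mpolyZ. Qed.
Lemma subst2C x : subst2 x%:MP u v = x%:MP.
Proof. by rewrite subst2.unlock; exact: comp_mpolyC. Qed.
Lemma subst20 : subst2 0 u v = 0.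
Proof. by rewrite subst2.unlock; exact: comp_mpoly0. Qed.
Lemma subst2X0 : subst2 'X_0 u v = u.
Proof. by rewrite subst2.unlock; exact: comp_mpolyXU. Qed.
Lemma subst2X1 : subst2 'X_1 u v = v.
Proof. by rewrite subst2.unlock; exact: comp_mpolyXU. Qed.

Lemma subst2_subst2 g (s t : poly2 F) :
  subst2 (subst2 g s t) u v = subst2 g (subst2 s u v) (subst2 t u v).
Proof.
rewrite subst2.unlock comp_mpoly_comp; congr comp_mpoly.
by apply: eq_from_tnth => i; rewrite tnth_mktuple; case: i => [[|[|]]].
Qed.

Lemma subst3D p q :
  subst3 (p + q) s0 s1 s2 = subst3 p s0 s1 s2 + subst3 q s0 s1 s2.
Proof. by rewrite subst3.unlock; exact: comp_mpolyD. Qed.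
Lemma subst3N p : subst3 (- p) s0 s1 s2 = - subst3 p s0 s1 s2.
Proof. by rewrite subst3.unlock; exact: comp_mpolyN. Qed.
Lemma subst3B p q :
  subst3 (p - q) s0 s1 s2 = subst3 p s0 s1 s2 - subst3 q s0 s1 s2.
Proof. by rewrite subst3.unlock; exact: comp_mpolyB. Qed.
Lemma subst3M p q :
  subst3 (p * q) s0 s1 s2 = subst3 p s0 s1 s2 * subst3 q s0 s1 s2.
Proof. by rewrite subst3.unlock; exact: rmorphM. Qed.
Lemma subst31 : subst3 1 s0 s1 s2 = 1.
Proof. by rewrite subst3.unlock; exact: comp_mpoly1. Qed.
Lemma subst30 : subst3 0 s0 s1 s2 = 0.
Proof. by rewrite subst3.unlock; exact: comp_mpoly0. Qed.
Lemma subst3X0 : subst3 'X_0 s0 s1 s2 = s0.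
Proof. by rewrite subst3.unlock; exact: comp_mpolyXU. Qed.
Lemma subst3X1 : subst3 'X_1 s0 s1 s2 = s1.
Proof. by rewrite subst3.unlock; exact: comp_mpolyXU. Qed.
Lemma subst3X2 : subst3 'X_2 s0 s1 s2 = s2.
Proof. by rewrite subst3.unlock; exact: comp_mpolyXU. Qed.

Lemma subst3_subst2 g (s t : poly3 F) :
  subst3 (subst2 g s t) s0 s1 s2 = subst2 g (subst3 s s0 s1 s2) (subst3 t s0 s1 s2).
Proof.
rewrite subst3.unlock subst2.unlock comp_mpoly_comp; congr comp_mpoly.
by apply: eq_from_tnth => i; rewrite tnth_mktuple; case: i => [[|[|]]].
Qed.

End Substitution.

Definition subst2E :=
  (subst2D, subst2B, subst2N, subst2M, subst2Z, subst2C, subst20, subst2X0, subst2X1).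
Definition subst3E :=
  (subst3D, subst3B, subst3N, subst3M, subst30, subst3X0, subst3X1, subst3X2, subst3_subst2).

Lemma subst2_id (F : comRingType) (g : poly2 F) : subst2 g 'X_0 'X_1 = g.
Proof.
rewrite subst2.unlock -[RHS]comp_mpoly_id; congr comp_mpoly.
by apply: eq_from_tnth => i; rewrite tnth_mktuple; case: i => [[|[|]]].
Qed.

Lemma substMuE (F : comRingType) (p : poly3 F) :
  substMu p = subst3 p 'X_0 (- 'X_0 - 'X_2) 'X_2.
Proof. by rewrite subst3.unlock. Qed.

Lemma subst2_00 (F : comRingType) (g : poly2 F) :
  subst2 g 0 (0 : poly2 F) = (g.@[fun _ => 0])%:MP.
Proof.
rewrite subst2.unlock comp_mpolyEX mevalE rmorph_sum /=.
apply: eq_bigr => m _; rewrite comp_mpolyX -mul_mpolyC rmorphM rmorph_prod /=.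
congr (_ * _); apply: eq_bigr => i _.
by rewrite (_ : tnth _ i = 0) ?rmorphXn //; case: i => [[|[|]]].
Qed.

Definition eL {F : comRingType} : elt F := (1, 0).
Definition eW {F : comRingType} : elt F := (0, 1).

Lemma ofR_L (F : comRingType) : ofR (1 : {poly F}) 0 = eL.
Proof. by rewrite /ofR rmorph1 raddf0 !hornerE. Qed.
Lemma ofR_W (F : comRingType) : ofR (0 : {poly F}) 1 = eW.
Proof. by rewrite /ofR rmorph1 raddf0 !hornerE. Qed.

Lemma sum_ord2x2 (V : nmodType) (A : 'I_2 -> 'I_2 -> V) :
  \sum_(i < 2) \sum_(j < 2) A i j
  = A ord0 ord0 + A ord0 ord_max + A ord_max ord0 + A ord_max ord_max.
Proof.
rewrite !big_ord_recl !big_ord0 !addr0 !addrA.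
by have -> : lift ord0 ord0 = ord_max :> 'I_2 by apply: val_inj.
Qed.

Section Products.
Variables (F : comRingType) (f1 f2 g1 g2 h1 h2 k1 k2 : poly2 F).
Local Notation P := (mkdata f1 f2 g1 g2 h1 h2 k1 k2).
Implicit Types (nu : poly3 F) (x y : elt F).

Lemma cprodE nu x y : cprod P nu x y =
  (subst3 x.1 'X_0 'X_1 (- nu) * subst3 y.1 'X_0 'X_1 ('X_2 + nu) * subst2 f1 nu 'X_2
   + subst3 x.1 'X_0 'X_1 (- nu) * subst3 y.2 'X_0 'X_1 ('X_2 + nu) * subst2 g1 nu 'X_2
   + subst3 x.2 'X_0 'X_1 (- nu) * subst3 y.1 'X_0 'X_1 ('X_2 + nu) * subst2 h1 nu 'X_2
   + subst3 x.2 'X_0 'X_1 (- nu) * subst3 y.2 'X_0 'X_1 ('X_2 + nu) * subst2 k1 nu 'X_2,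
   subst3 x.1 'X_0 'X_1 (- nu) * subst3 y.1 'X_0 'X_1 ('X_2 + nu) * subst2 f2 nu 'X_2
   + subst3 x.1 'X_0 'X_1 (- nu) * subst3 y.2 'X_0 'X_1 ('X_2 + nu) * subst2 g2 nu 'X_2
   + subst3 x.2 'X_0 'X_1 (- nu) * subst3 y.1 'X_0 'X_1 ('X_2 + nu) * subst2 h2 nu 'X_2
   + subst3 x.2 'X_0 'X_1 (- nu) * subst3 y.2 'X_0 'X_1 ('X_2 + nu) * subst2 k2 nu 'X_2).
Proof. by rewrite /cprod !sum_ord2x2 /substD /liftP subst2.unlock subst3.unlock. Qed.

Lemma cprod_xL nu x : cprod P nu x eL =
  (subst3 x.1 'X_0 'X_1 (- nu) * subst2 f1 nu 'X_2
     + subst3 x.2 'X_0 'X_1 (- nu) * subst2 h1 nu 'X_2,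
   subst3 x.1 'X_0 'X_1 (- nu) * subst2 f2 nu 'X_2
     + subst3 x.2 'X_0 'X_1 (- nu) * subst2 h2 nu 'X_2).
Proof. by rewrite cprodE /= subst31 subst30 !mulr1 !mulr0 !mul0r !addr0. Qed.

Lemma cprod_xW nu x : cprod P nu x eW =
  (subst3 x.1 'X_0 'X_1 (- nu) * subst2 g1 nu 'X_2
     + subst3 x.2 'X_0 'X_1 (- nu) * subst2 k1 nu 'X_2,
   subst3 x.1 'X_0 'X_1 (- nu) * subst2 g2 nu 'X_2
     + subst3 x.2 'X_0 'X_1 (- nu) * subst2 k2 nu 'X_2).
Proof. by rewrite cprodE /= subst31 subst30 !mulr1 !mulr0 !mul0r !add0r !addr0. Qed.

Lemma cprod_Ly nu y : cprod P nu eL y =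
  (subst3 y.1 'X_0 'X_1 ('X_2 + nu) * subst2 f1 nu 'X_2
     + subst3 y.2 'X_0 'X_1 ('X_2 + nu) * subst2 g1 nu 'X_2,
   subst3 y.1 'X_0 'X_1 ('X_2 + nu) * subst2 f2 nu 'X_2
     + subst3 y.2 'X_0 'X_1 ('X_2 + nu) * subst2 g2 nu 'X_2).
Proof. by rewrite cprodE /= subst31 subst30 !mul1r !mul0r !addr0. Qed.

Lemma cprod_Wy nu y : cprod P nu eW y =
  (subst3 y.1 'X_0 'X_1 ('X_2 + nu) * subst2 h1 nu 'X_2
     + subst3 y.2 'X_0 'X_1 ('X_2 + nu) * subst2 k1 nu 'X_2,
   subst3 y.1 'X_0 'X_1 ('X_2 + nu) * subst2 h2 nu 'X_2
     + subst3 y.2 'X_0 'X_1 ('X_2 + nu) * subst2 k2 nu 'X_2).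
Proof. by rewrite cprodE /= subst31 subst30 !mul1r !mul0r !add0r. Qed.

Lemma cprod_LL nu : cprod P nu eL eL = (subst2 f1 nu 'X_2, subst2 f2 nu 'X_2).
Proof. by rewrite cprod_xL /= subst31 subst30 !mul1r !mul0r !addr0. Qed.
Lemma cprod_LW nu : cprod P nu eL eW = (subst2 g1 nu 'X_2, subst2 g2 nu 'X_2).
Proof. by rewrite cprod_xW /= subst31 subst30 !mul1r !mul0r !addr0. Qed.
Lemma cprod_WL nu : cprod P nu eW eL = (subst2 h1 nu 'X_2, subst2 h2 nu 'X_2).
Proof. by rewrite cprod_xL /= subst31 subst30 !mul1r !mul0r !add0r. Qed.
Lemma cprod_WW nu : cprod P nu eW eW = (subst2 k1 nu 'X_2, subst2 k2 nu 'X_2).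
Proof. by rewrite cprod_xW /= subst31 subst30 !mul1r !mul0r !add0r. Qed.

End Products.

Lemma eq_of_diff {R : pzRingType} (k : R) {u v x y : R} :
  u = v -> x - y = k * (u - v) -> x = y.
Proof. by move=> -> /eqP; rewrite subrr mulr0 subr_eq0 => /eqP. Qed.

Local Notation "'λ'" := ('X_0 : {mpoly _[2]}).
Local Notation "'∂'" := ('X_1 : {mpoly _[2]}).

Section Identities.
Context {F : comRingType} {a b c : F} {f1 f2 g1 g2 h1 h2 k1 k2 : poly2 F}.
Local Notation P := (mkdata f1 f2 g1 g2 h1 h2 k1 k2).

Lemma compatible_LW : compatible (Wab a b) P -> g1 = subst2 h1 (- λ - ∂) ∂.
Proof.
move=> /(_ 1 0 0 1); cbv zeta; rewrite ofR_L ofR_W /Wab !cprod_LW !cprod_WL /=.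
move=> /(congr1 (fun e => subst3 e.1 λ 0 ∂)).
rewrite /= !substMuE /lam /mu !subst3E ?(addr0, add0r, oppr0, subr0, sub0r).
by rewrite subst2_id subst20 => /subr0_eq.
Qed.

Hypotheses (LS : left_symmetric P) (Hf1 : f1 = ∂ + λ + c%:MP) (Hf2 : f2 = 0)
  (Hg2 : g2 = ∂ + a *: λ + (b + c)%:MP) (Hh2 : h2 = c%:MP).

Lemma left_symmetric_LLW :
  b%:MP * g1 = (∂ + a *: λ + (b + c)%:MP) * subst2 g1 0 ∂
               - (∂ + λ + c%:MP) * subst2 g1 0 (∂ + λ).
Proof.
have := LS 1 0 1 0 0 1; cbv zeta; rewrite ofR_L ofR_W.
rewrite !cprod_LL !cprod_LW !cprod_xW !cprod_Ly /=.
move=> /(congr1 (fun e => subst3 e.1 λ 0 ∂)).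
rewrite /= /lam /mu !subst3E ?(addr0, add0r, oppr0, subr0, sub0r) subst2_id.
rewrite Hf1 Hf2 Hg2 !subst2E !subst2_id -!mul_mpolyC => E.
by apply: (eq_of_diff (-1) E); ring.
Qed.

Lemma left_symmetric_WLL :
  ((1 - a)%:MP * ∂ + b%:MP) * subst2 h1 (- ∂) ∂ = c%:MP * subst2 h1 0 0.
Proof.
have := LS 0 1 1 0 1 0; cbv zeta; rewrite ofR_L ofR_W.
rewrite !cprod_WL !cprod_LL !cprod_LW !cprod_xL !cprod_Wy !cprod_Ly /=.
move=> /(congr1 (fun e => subst3 e.1 0 (- ∂) ∂)).
rewrite /= /lam /mu !subst3E ?(addr0, add0r, oppr0, subr0, sub0r, subrr, opprK).
rewrite Hf1 Hf2 Hg2 Hh2 !subst2E -!mul_mpolyC => E.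
by apply: (eq_of_diff (-1) E); ring.
Qed.

Lemma left_symmetric_LWW : compatible (Wab a b) P ->
  b%:MP * k2 = - (c%:MP * subst2 g1 0 (∂ + λ)) /\
  (2 * b)%:MP * k1 = k2 * subst2 g1 0 ∂ - subst2 g1 0 (∂ + λ) * h1.
Proof.
move=> CP; have g1h1 : subst2 g1 0 (- λ) = subst2 h1 λ (- λ).
  by rewrite {1}(compatible_LW CP) subst2_subst2 !subst2E oppr0 sub0r opprK.
have := LS 1 0 0 1 0 1; cbv zeta; rewrite ofR_L ofR_W.
rewrite !cprod_LW !cprod_WW !cprod_WL !cprod_xW !cprod_Ly !cprod_Wy /=.
move=> /(congr1 (fun e => (subst3 e.1 0 λ ∂, subst3 e.2 0 λ ∂))) [].
rewrite /lam /mu !subst3E ?(addr0, add0r, oppr0, subr0, sub0r, subrr, opprK) !subst2_id.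
rewrite Hf1 Hf2 Hg2 Hh2 !subst2E -!mul_mpolyC g1h1 => E1 E2.
by split; [apply: (eq_of_diff 1 E2) | apply: (eq_of_diff 1 E1)]; ring.
Qed.

End Identities.

Section AffineEquation.
Context {F : fieldType} {a b c : F}.
Hypotheses (b_neq0 : b != 0) (c_neq0 : c != 0).

Lemma const_of_affine_mul (p p0 : poly2 F) : subst2 p 0 0 = p0 ->
  ((1 - a)%:MP * ∂ + b%:MP) * p = c%:MP * p0 -> p = p0 /\ (p0 = 0 \/ a = 1 /\ c = b).
Proof.
move=> p00 E.
have p0_const (s t : poly2 F) : subst2 p0 s t = p0.
  by rewrite -p00 subst2_subst2 !subst20.
have at_pt (s t : poly2 F) :
    ((1 - a)%:MP * t + b%:MP) * subst2 p s t = c%:MP * p0.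
  by move: E => /(congr1 (fun q => subst2 q s t)); rewrite !subst2E p0_const.
have bC_neq0 : (b%:MP : poly2 F) != 0 by rewrite mpolyC_eq0.
have [a1 | a_neq1] := eqVneq a 1.
  have {}E : b%:MP * p = c%:MP * p0 by rewrite -E a1 subrr mul0r add0r.
  have := at_pt 0 0; rewrite mulr0 add0r p00 => /eqP; rewrite -subr_eq0 -mulrBl.
  rewrite mulf_eq0 -mpolyCB mpolyC_eq0 subr_eq0 => /orP[/eqP bc | /eqP p0_eq0].
    by split; [apply: (mulfI bC_neq0); rewrite E bc | right].
  by split; [apply: (mulfI bC_neq0); rewrite E p0_eq0 !mulr0 | left].
have p0_eq0 : p0 = 0.
  have := at_pt 0 (- b / (1 - a))%:MP; rewrite -mpolyCM -mpolyCD.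
  rewrite (_ : (1 - a) * (- b / (1 - a)) + b = 0); last first.
    by field; rewrite subr_eq0 eq_sym.
  by rewrite mul0r => /esym/eqP; rewrite mulf_eq0 mpolyC_eq0 (negPf c_neq0) => /eqP.
split; [|by left]; rewrite p0_eq0; apply/eqP.
move: E; rewrite p0_eq0 mulr0 => /eqP; rewrite mulf_eq0 => /orP[/eqP|//].
move=> /(congr1 (fun q => subst2 q 0 (0 : poly2 F))); rewrite !subst2E mulr0 add0r.
by move=> /eqP; rewrite mpolyC_eq0 (negPf b_neq0).
Qed.

End AffineEquation.

Section Classification.
Context {F : fieldType} {a b c : F} {f1 f2 g1 g2 h1 h2 k1 k2 : poly2 F}.
Local Notation P := (mkdata f1 f2 g1 g2 h1 h2 k1 k2).
Hypotheses (b_neq0 : b != 0) (c_neq0 : c != 0) (two_neq0 : 2%:R != 0 :> F).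
Hypotheses (LS : left_symmetric P) (CP : compatible (Wab a b) P).
Hypotheses (Hf1 : f1 = ∂ + λ + c%:MP) (Hf2 : f2 = 0)
  (Hg2 : g2 = ∂ + a *: λ + (b + c)%:MP) (Hh2 : h2 = c%:MP).

Let bC_neq0 : (b%:MP : poly2 F) != 0. Proof. by rewrite mpolyC_eq0. Qed.

Lemma h1_of_g1 : h1 = subst2 g1 (- λ - ∂) ∂.
Proof.
rewrite (compatible_LW CP) subst2_subst2 !subst2E.
by rewrite (_ : - (- λ - ∂) - ∂ = λ) ?subst2_id //; ring.
Qed.

Lemma g1_const : exists2 d : F, g1 = d%:MP & d = 0 \/ a = 1 /\ c = b.
Proof.
pose D := subst2 g1 0 (0 : poly2 F).
have [phiD HD] : subst2 g1 0 ∂ = D /\ (D = 0 \/ a = 1 /\ c = b).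
  apply: (const_of_affine_mul b_neq0 c_neq0); first by rewrite subst2_subst2 !subst2E.
  have := left_symmetric_WLL LS Hf1 Hf2 Hg2 Hh2.
  by rewrite h1_of_g1 !subst2_subst2 !subst2E ?(opprK, subrr, oppr0, subr0).
have psiD : subst2 g1 0 (∂ + λ) = D.
  move: phiD => /(congr1 (fun q => subst2 q 0 (∂ + λ))).
  by rewrite /D !subst2_subst2 !subst2E.
have gD : g1 = D.
  apply: (mulfI bC_neq0); rewrite (left_symmetric_LLW LS Hf1 Hf2 Hg2) phiD psiD.
  by case: HD => [-> | [-> ->]]; rewrite -?mul_mpolyC; ring.
exists (g1.@[fun _ => 0]); first by rewrite {1}gD /D subst2_00.
case: HD => [|?]; last by right.
by rewrite /D subst2_00 => /eqP; rewrite mpolyC_eq0 => /eqP; left.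
Qed.

Lemma h1_const {d : F} : g1 = d%:MP -> h1 = d%:MP.
Proof. by move=> gd; rewrite h1_of_g1 gd subst2C. Qed.

Lemma k_values {d : F} : g1 = d%:MP ->
  k2 = (- (c * d / b))%:MP /\ k1 = (- ((c + b) * d ^+ 2 / (2 * b ^+ 2)))%:MP.
Proof.
move=> gd; have [E2 E1] := left_symmetric_LWW LS Hf1 Hf2 Hg2 Hh2 CP.
rewrite (h1_const gd) gd !subst2C in E1 E2.
have k2E : k2 = (- (c * d / b))%:MP.
  by apply: (mulfI bC_neq0); rewrite E2 -!mpolyCM -mpolyCN; congr mpolyC; field.
split=> //; have two_bC_neq0 : ((2 * b)%:MP : poly2 F) != 0.
  by rewrite mpolyC_eq0 mulf_neq0.
apply: (mulfI two_bC_neq0); rewrite E1 k2E -!mpolyCM -mpolyCB.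
by congr mpolyC; field; rewrite b_neq0.
Qed.

End Classification.

Theorem lemma3p3 (R : realType) (a b c : R[i])
    (f1 f2 g1 g2 h1 h2 k1 k2 : {mpoly R[i][2]}) :
  b != 0 ->
  left_symmetric (mkdata f1 f2 g1 g2 h1 h2 k1 k2) ->
  compatible (Wab a b) (mkdata f1 f2 g1 g2 h1 h2 k1 k2) ->
  f2 = 0 ->
  f1 = 'X_1 + 'X_0 + c%:MP ->
  c != 0 ->
  g2 = 'X_1 + a *: 'X_0 + (b + c)%:MP ->
  h2 = c%:MP ->
  (h1 = 0 /\ g1 = 0 /\ k1 = 0 /\ k2 = 0 /\
     g2 = 'X_1 + a *: 'X_0 + (b + c)%:MP /\ h2 = c%:MP)
  \/
  (exists d : R[i], d != 0 /\ a = 1 /\ c = b /\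
     g2 = 'X_1 + 'X_0 + (2%:R * b)%:MP /\ h2 = b%:MP /\
     g1 = d%:MP /\ h1 = d%:MP /\ k1 = (- (d ^+ 2 / b))%:MP /\ k2 = (- d)%:MP).
Proof.
move=> b_neq0 LS CP Hf2 Hf1 c_neq0 Hg2 Hh2.
have two_neq0 : 2%:R != 0 :> R[i] by rewrite pnatr_eq0.
have [d Hg1 Hd] := g1_const b_neq0 c_neq0 LS CP Hf1 Hf2 Hg2 Hh2.
have Hh1 := h1_const CP Hg1.
have [Hk2 Hk1] := k_values b_neq0 two_neq0 LS CP Hf1 Hf2 Hg2 Hh2 Hg1.
have [d0 | d_neq0] := eqVneq d 0.
  left; rewrite Hh1 Hg1 Hk1 Hk2 d0 expr0n /= !(mulr0, mul0r, oppr0).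
  by do !split.
have [a1 cb] : a = 1 /\ c = b by case: Hd => // d0; rewrite d0 eqxx in d_neq0.
right; exists d; subst a c.
rewrite Hg2 Hh2 Hg1 Hh1 Hk1 Hk2 scale1r mulr_natl mulr2n.
by do !split=> //; apply/eqP; rewrite mpolyC_eq; apply/eqP; field; rewrite b_neq0 ?two_neq0.
Qed.
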